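(* Let $F$ be a bijection of $\mathbb F_2^m$ with $F(0)=0$. Then $F$ is APN if and only if $v_F(a)=2^{m-1}$ for all $a\in\mathbb F_2^m\setminus\{0\}$.
   Context: $F:\mathbb F_2^m\to\mathbb F_2^m$ with $F(0)=0$ is APN (almost perfect nonlinear) if for all $a,b\in\mathbb F_2^m$ with $b\ne 0$ the equation $F(x)+F(x+b)=a$ has at most two solutions $x\in\mathbb F_2^m$. For nonzero $a$, $v_F(a)=|\{x+F^{-1}(a+F(x)) : x\in\mathbb F_2^m\}|$. *)

From HB Require Import structures.
From mathcomp Require Import all_boot all_order all_algebra.
Set Implicit Arguments. Unset Strict Implicit. Unset Printing Implicit Defensive.
Import GRing.Theory.
Local Open Scope ring_scope.

Notation vecF2 m := 'rV['F_2]_m.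

Definition APN (m : nat) (F : vecF2 m -> vecF2 m) : Prop :=
  forall a b : vecF2 m, b != 0 ->
    (#|[set x : vecF2 m | (F x + F (x + b))%R == a]| <= 2)%N.

(* v_F(a) = |{ x + F^{-1}(a + F x) : x }|.  For bijective F, the element
   F^{-1}(a + F x) is the unique y with F y = a + F x. *)
Definition vF (m : nat) (F : vecF2 m -> vecF2 m) (a : vecF2 m) : nat :=
  #|[set (p.1 + p.2)%R | p in [set p : vecF2 m * vecF2 m | F p.2 == (a + F p.1)%R]]|.

From mathcomp Require Import all_boot all_order all_algebra.
Local Open Scope ring_scope.
Import GRing.Theory.
Set Implicit Arguments. Unset Strict Implicit.

(* For a, b in F_2^m let D(a, b) = {x | F x + F (x + b) = a} be the solution
   set of the derivative equation.  The proof rests on three facts.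
   - Counting: if F is bijective, every x lies in exactly one D(a, b) for a
     fixed a (namely b = x + F^-1(a + F x)), so sum_b |D(a, b)| = 2^m.
   - Parity: for b <> 0, x |-> x + b is a fixed-point-free involution of
     D(a, b), so |D(a, b)| is 0 or at least 2; for a <> 0, D(a, 0) is empty.
   - v_F(a) is the number of b with D(a, b) nonempty.
   An elementary lemma on sums of naturals avoiding the value 1 then shows
   that sum_b |D(a, b)| = 2 v_F(a) iff every |D(a, b)| is at most 2.  Hence,
   for a <> 0, v_F(a) = 2^(m-1) iff all |D(a, b)| <= 2; since D(0, b) is
   empty for b <> 0 by injectivity, this is exactly the APN property. *)

Lemma sum_eq_double_support (I : finType) (f : I -> nat) :
  (forall i, f i != 1%N) ->
  (\sum_i f i = 2 * #|[set i | f i != 0%N]|)%N <-> (forall i, f i <= 2)%N.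
Proof.
move=> f_neq1.
have sum_supp : (\sum_i f i = \sum_(i | f i != 0%N) f i)%N.
  rewrite (bigID (fun i => f i != 0%N)) /= [X in (_ + X)%N]big1 ?addn0 //.
  by move=> i /negbNE/eqP.
have cmp2 : forall i, f i != 0%N -> (2 <= f i ?= iff (f i == 2))%N.
  move=> i fi0; split; last by rewrite eq_sym.
  by move: (f_neq1 i) fi0; case: (f i) => [|[|n]].
rewrite sum_supp mulnC -sum_nat_cond_const.
have [_ eq_sums] := @leqif_sum I (fun i => f i != 0%N) _ (fun=> 2%N) f cmp2.
split=> [/esym/eqP | le2].
- rewrite eq_sums => /forall_inP all2 i.
  by have [->|/all2/eqP->] := eqVneq (f i) 0%N.
- apply/esym/eqP; rewrite eq_sums; apply/forall_inP => i fi0.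
  by rewrite eqn_leq le2 (cmp2 i fi0).1.
Qed.

Section Derivatives.

Variable m : nat.
Implicit Types (F : 'rV['F_2]_m -> 'rV['F_2]_m) (a b x : 'rV['F_2]_m).

Lemma addvv x : x + x = 0.
Proof. by apply/rowP => i; rewrite !mxE (addrr_pchar2 (pchar_Fp _)). Qed.

Lemma addvK x b : x + (x + b) = b.
Proof. by rewrite addrA addvv add0r. Qed.

Definition derivSet F a b := [set x | F x + F (x + b) == a].

Lemma derivSet_shift F a b x :
  (x + b \in derivSet F a b) = (x \in derivSet F a b).
Proof. by rewrite !inE -addrA addvv addr0 addrC. Qed.

Lemma derivSet_b0 F a : a != 0 -> derivSet F a 0 = set0.
Proof.
by move=> a0; apply/setP => x; rewrite !inE addr0 addvv eq_sym (negbTE a0).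
Qed.

(* For a <> 0 no solution count equals 1: solutions come in pairs {x, x + b}. *)
Lemma derivSet_card_neq1 F a b :
  a != 0 -> #|derivSet F a b| != 1%N.
Proof.
move=> a0; have [->|b0] := eqVneq b 0; first by rewrite derivSet_b0 ?cards0.
apply/cards1P => -[x Dx]; have : x + b \in derivSet F a b.
  by rewrite derivSet_shift Dx set11.
rewrite Dx inE -{2}[x]addr0 => /eqP/addrI/eqP; exact/negP.
Qed.

Lemma derivSet_a0 F b : injective F -> b != 0 -> derivSet F 0 b = set0.
Proof.
move=> injF b0; apply/setP => x; rewrite !inE; apply/negP => /eqP Fx.
have /injF : F x = F (x + b) by rewrite -[F x]addr0 -Fx addvK.
by move=> /(congr1 (fun y => x + y)); rewrite addvv addvK => /esym/eqP; apply/negP.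
Qed.

Lemma APN_nonzero F :
  injective F ->
  APN F <-> (forall a, a != 0 -> forall b, (#|derivSet F a b| <= 2)%N).
Proof.
move=> injF; split=> [apnF a a0 b | le2 a b b0].
  have [->|b0] := eqVneq b 0; last exact: apnF.
  by rewrite derivSet_b0 ?cards0.
have [->|a0] := eqVneq a 0; last exact: le2.
by rewrite -/(derivSet F 0 b) derivSet_a0 ?cards0.
Qed.

Lemma vF_support F a : vF F a = #|[set b | #|derivSet F a b| != 0%N]|.
Proof.
apply: eq_card => b; rewrite [in RHS]inE cards_eq0.
apply/imsetP/set0Pn => [[[x y]] | [x Dx]].
- rewrite inE /= => /eqP Fy ->; exists x.
  by rewrite inE addvK Fy addrC -addrA addvv addr0.
- exists (x, x + b); last by rewrite addvK.
  by rewrite inE /=; move: Dx; rewrite inE => /eqP <-; rewrite [_ + F x]addrC addvK.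
Qed.

(* For bijective F the sets D(a, b), b in F_2^m, partition F_2^m. *)
Lemma sum_derivSet F G a :
  cancel F G -> cancel G F ->
  (\sum_b #|derivSet F a b| = #|'rV['F_2]_m|)%N.
Proof.
move=> FK GK; rewrite -sum1_card.
rewrite [RHS](partition_big (fun x => x + G (a + F x)) predT) //=.
apply: eq_bigr => b _; rewrite -sum1_card; apply: eq_bigl => x.
rewrite inE; apply/eqP/eqP => [<- | <-].
- by rewrite [_ + F x]addrC addvK FK addvK.
- by rewrite addvK GK [a + _]addrC addvK.
Qed.

End Derivatives.

Theorem mainTheorem10 (m : nat) (F : 'rV['F_2]_m -> 'rV['F_2]_m) :
  bijective F -> F 0 = 0 ->
  (APN F <-> (forall a : 'rV['F_2]_m, a != 0 -> vF F a = (2 ^ (m - 1))%N)).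
Proof.
case=> G FK GK _; have APN_iff := APN_nonzero (can_inj FK).
have vF_iff a : a != 0 ->
    vF F a = (2 ^ (m - 1))%N <-> (forall b, #|derivSet F a b| <= 2)%N.
  move=> a0; have m_gt0 : (0 < m)%N.
    by case: m a a0 {F G FK GK APN_iff} => // a; rewrite thinmx0 eqxx.
  apply: iff_trans (sum_eq_double_support (fun b => derivSet_card_neq1 F b a0)).
  rewrite (sum_derivSet a FK GK) card_mx card_Fp // mul1n -vF_support.
  have -> : (2 ^ m = 2 * 2 ^ (m - 1))%N by rewrite -expnS subn1 prednK.
  by split=> [-> // | /eqP]; rewrite eqn_pmul2l // => /eqP.
split=> [/APN_iff le2 a a0 | vF_half]; first exact/vF_iff/le2.
by apply/APN_iff => a a0; apply/vF_iff/vF_half.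
Qed.
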